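(* Let $0<\lambda<\frac{5-\sqrt{21}}{2}$ and let $K$ be the attractor of the IFS $f_1(x)=\lambda x$, $f_2(x)=\lambda x+2\lambda$, $f_3(x)=\lambda x+3\lambda-\lambda^2$, $f_4(x)=\lambda x+1-\lambda$. If $x\in K$ has infinitely many codings, then $x$ has uncountably many codings; in particular $U_{\aleph_0}=\emptyset$.
   Context: A coding of $x\in K$ is a sequence $(i_n)\in\{1,2,3,4\}^{\mathbb{N}}$ with $x=\lim_{n\to\infty}f_{i_1}\circ\cdots\circ f_{i_n}(0)$. $U_{\aleph_0}$ denotes the set of $x\in K$ having exactly countably infinitely many codings. *)

From Stdlib Require Import Reals List.
Open Scope R_scope.

Inductive digit : Set := D1 | D2 | D3 | D4.

Definition fmap (lam : R) (i : digit) (x : R) : R :=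
  match i with
  | D1 => lam * x
  | D2 => lam * x + 2 * lam
  | D3 => lam * x + 3 * lam - lam ^ 2
  | D4 => lam * x + 1 - lam
  end.

(* A sequence (i_n) in {1,2,3,4}^N, with i_1 stored at index 0. *)
Definition seq4 := nat -> digit.

(* comp lam a n x = f_{a 0} o f_{a 1} o ... o f_{a (n-1)} (x) *)
Fixpoint comp (lam : R) (a : seq4) (n : nat) (x : R) : R :=
  match n with
  | O => x
  | S m => fmap lam (a O) (comp lam (fun k => a (S k)) m x)
  end.

Definition is_coding (lam : R) (a : seq4) (x : R) : Prop :=
  Un_cv (fun n => comp lam a n 0) x.

(* The attractor K: the set of points admitting a coding (the image of the
   coding map, which is the attractor of this contracting IFS). *)
Definition attractor (lam : R) (x : R) : Prop := exists a : seq4, is_coding lam a x.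

Definition seq_eq (a b : seq4) : Prop := forall k, a k = b k.

Definition finite_set (P : seq4 -> Prop) : Prop :=
  exists l : list seq4, forall a, P a -> exists b, In b l /\ seq_eq a b.

Definition countable_set (P : seq4 -> Prop) : Prop :=
  exists g : nat -> seq4, forall a, P a -> exists n, seq_eq a (g n).

Definition U_aleph0 (lam : R) (x : R) : Prop :=
  attractor lam x /\ ~ finite_set (fun a => is_coding lam a x)
  /\ countable_set (fun a => is_coding lam a x).

(* The maps satisfy f_2 o f_4 = f_3 o f_1, and for lam < (5 - sqrt 21)/2 this is
   the only overlap: two codings of the same point that agree up to position p
   (in the sense that their prefixes give the same map) either agree at p or
   read the "block" 24 against 31 at positions p, p+1, after which they are
   synchronised again.  Hence the codings of x are obtained from any one coding
   by independently swapping 24 <-> 31 at its block positions.  Finitely many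
   blocks give finitely many codings; infinitely many blocks give a Cantor set
   of codings, which defeats every enumeration by a diagonal choice of blocks. *)

From Pilot Require Import Defs.
From Stdlib Require Import Reals Lra Lia List Classical.
Open Scope R_scope.
(* [Reals] also exports a [comp]. *)
Local Notation comp := Defs.comp.

Definition shift (lam : R) (d : digit) : R := fmap lam d 0.

Definition cyl_left (lam : R) (a : seq4) (n : nat) : R := comp lam a n 0.

Lemma comp_last lam a n y : comp lam a (S n) y = comp lam a n (fmap lam (a n) y).
Proof.
  revert a; induction n as [|n IH]; intros a; [reflexivity|].
  simpl; rewrite <- IH; reflexivity.
Qed.

Lemma comp_affine lam a n y : comp lam a n y = comp lam a n 0 + lam ^ n * y.
Proof.
  revert a; induction n as [|n IH]; intros a; simpl; [ring|].
  rewrite IH; destruct (a O); simpl; ring.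
Qed.

Lemma cyl_left_S lam a n : cyl_left lam a (S n) = cyl_left lam a n + lam ^ n * shift lam (a n).
Proof. unfold cyl_left, shift; rewrite comp_last, comp_affine; reflexivity. Qed.

Definition digit_eq_dec (d e : digit) : {d = e} + {d <> e}.
Proof. decide equality. Defined.

Definition update (a : seq4) (n : nat) (d : digit) : seq4 :=
  fun k => if Nat.eqb k n then d else a k.

Fixpoint prefix_variants (a : seq4) (n : nat) : list seq4 :=
  match n with
  | O => a :: nil
  | S m => flat_map (fun c => map (update c m) (D1 :: D2 :: D3 :: D4 :: nil))
                    (prefix_variants a m)
  end.

Lemma prefix_variants_spec a n b :
  (forall k, (n <= k)%nat -> b k = a k) -> exists c, In c (prefix_variants a n) /\ seq_eq b c.
Proof.
  revert b; induction n as [|n IH]; intros b Hb.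
  - exists a; split; [left; reflexivity|]. intros k; apply Hb; lia.
  - destruct (IH (update b n (a n))) as [c [Hc Hbc]].
    { intros k Hk; unfold update. destruct (Nat.eqb_spec k n); subst; auto. apply Hb; lia. }
    exists (update c n (b n)); split.
    + apply in_flat_map; exists c; split; [exact Hc|].
      apply in_map; destruct (b n); simpl; tauto.
    + intros k; specialize (Hbc k); unfold update in *.
      destruct (Nat.eqb_spec k n); congruence.
Qed.

Lemma finite_set_eventually_eq (P : seq4 -> Prop) a n :
  (forall b, P b -> forall k, (n <= k)%nat -> b k = a k) -> finite_set P.
Proof.
  intros H; exists (prefix_variants a n); intros b Hb.
  exact (prefix_variants_spec a n b (H b Hb)).
Qed.

Lemma Un_cv_pow_0 r : 0 <= r < 1 -> Un_cv (pow r) 0.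
Proof.
  intros Hr eps Heps.
  destruct (pow_lt_1_zero r ltac:(rewrite Rabs_right; lra) eps Heps) as [N HN].
  exists N; intros n Hn; unfold R_dist; rewrite Rminus_0_r; exact (HN n Hn).
Qed.

Definition block_pair (d0 d1 : digit) : Prop :=
  (d0 = D2 /\ d1 = D4) \/ (d0 = D3 /\ d1 = D1).

Definition block (a : seq4) (p : nat) : Prop := block_pair (a p) (a (S p)).

Definition block_dec a p : {block a p} + {~ block a p}.
Proof.
  unfold block, block_pair.
  destruct (a p), (a (S p)); first [left; tauto | right; intuition discriminate].
Defined.

Lemma block_not_S a p : block a p -> ~ block a (S p).
Proof. unfold block, block_pair; intuition congruence. Qed.

Fixpoint block_count (a : seq4) (p : nat) : nat :=
  match p with
  | O => O
  | S p' => (block_count a p' + if block_dec a p' then 1 else 0)%nat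
  end.

Lemma block_count_mono a p q : (p <= q)%nat -> (block_count a p <= block_count a q)%nat.
Proof. induction 1 as [|q _ IH]; simpl; lia. Qed.

Lemma block_count_unbounded a : (forall N, exists p, (N <= p)%nat /\ block a p) ->
  forall n, exists q, (n < block_count a q)%nat.
Proof.
  intros Hinf n; induction n as [|n [q Hq]].
  - destruct (Hinf O) as [p [_ Hp]]; exists (S p); simpl.
    destruct (block_dec a p); [lia|contradiction].
  - destruct (Hinf q) as [p [Hqp Hp]]; exists (S p); simpl.
    pose proof (block_count_mono a q p Hqp); destruct (block_dec a p); [lia|contradiction].
Qed.

Lemma block_count_attained a n q : (n < block_count a q)%nat ->
  exists p, block a p /\ block_count a p = n.
Proof.
  induction q as [|q IH]; simpl; [lia|]; intros Hq.
  destruct (Nat.lt_ge_cases n (block_count a q)) as [Hlt|Hge]; [exact (IH Hlt)|].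
  destruct (block_dec a q) as [Hb|Hb]; [exists q; split; [exact Hb|lia]|lia].
Qed.

Definition block_start_avoiding (d : digit) : digit := match d with D2 => D3 | _ => D2 end.
Definition block_end_after (d : digit) : digit := match d with D3 => D1 | _ => D4 end.

(* [a] with the block at its [n]-th block position [p] replaced by the block
   whose first digit differs from [g n p]; blocks never overlap ([block_not_S]). *)
Definition diagonal (a : seq4) (g : nat -> seq4) (k : nat) : digit :=
  if block_dec a k then block_start_avoiding (g (block_count a k) k)
  else match k with
       | O => a O
       | S p => if block_dec a p
                then block_end_after (block_start_avoiding (g (block_count a p) p))
                else a k
       end.

Lemma diagonal_block a g p : block a p -> block (diagonal a g) p.
Proof.
  intros Hp; unfold block, diagonal.
  destruct (block_dec a p) as [_|]; [|contradiction].
  destruct (block_dec a (S p)) as [Hs|_]; [exact (False_ind _ (block_not_S a p Hp Hs))|].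
  destruct (block_dec a p) as [_|]; [|contradiction].
  unfold block_pair; destruct (g (block_count a p) p); simpl; tauto.
Qed.

Lemma diagonal_outside a g k : ~ block a k -> (forall p, k = S p -> ~ block a p) ->
  diagonal a g k = a k.
Proof.
  intros Hk Hin; unfold diagonal; destruct (block_dec a k) as [|_]; [contradiction|].
  destruct k as [|p]; [reflexivity|].
  destruct (block_dec a p) as [Hp|_]; [exact (False_ind _ (Hin p eq_refl Hp))|reflexivity].
Qed.

Lemma diagonal_avoids a g n p : block a p -> block_count a p = n -> diagonal a g p <> g n p.
Proof.
  intros Hp <-; unfold diagonal; destruct (block_dec a p) as [_|]; [|contradiction].
  destruct (g (block_count a p) p); discriminate.
Qed.

Section CodingsOfSmallLambda.

Variable lam : R.
Hypothesis lam_pos : 0 < lam.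
Hypothesis lam_lt_quarter : lam < 1 / 4.
(* The images of f_3 and f_4 are disjoint; this is [lam^2 - 5 lam + 1 > 0]. *)
Hypothesis lam_gap : 4 * lam - lam ^ 2 < 1 - lam.

Lemma shift_bounds d : 0 <= shift lam d <= 1 - lam.
Proof. unfold shift; destruct d; simpl; nra. Qed.

(* [K] lies in [0, 1], so this interval is the hull of the n-th cylinder of [a]. *)
Definition in_cyl (a : seq4) (x : R) (n : nat) : Prop :=
  cyl_left lam a n <= x <= cyl_left lam a n + lam ^ n.

Lemma cyl_left_le_S a n : cyl_left lam a n <= cyl_left lam a (S n).
Proof.
  rewrite cyl_left_S; pose proof (shift_bounds (a n)); pose proof (pow_lt lam n lam_pos); nra.
Qed.

Lemma cyl_right_ge_S a n :
  cyl_left lam a (S n) + lam ^ S n <= cyl_left lam a n + lam ^ n.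
Proof.
  rewrite cyl_left_S; pose proof (shift_bounds (a n)); pose proof (pow_lt lam n lam_pos).
  simpl; nra.
Qed.

Lemma in_cyl_le a x m n : in_cyl a x m -> (n <= m)%nat -> in_cyl a x n.
Proof.
  intros H Hle; induction Hle as [|m Hle IH]; [exact H|].
  apply IH; unfold in_cyl in *.
  pose proof (cyl_left_le_S a m); pose proof (cyl_right_ge_S a m); lra.
Qed.

Lemma is_coding_in_cyl a x : is_coding lam a x -> forall n, in_cyl a x n.
Proof.
  intros Hx n; split.
  - apply (growing_ineq (cyl_left lam a)); [exact (cyl_left_le_S a)|exact Hx].
  - apply (decreasing_ineq (fun n => cyl_left lam a n + lam ^ n));
      [exact (cyl_right_ge_S a)|].
    rewrite <- (Rplus_0_r x); apply CV_plus; [exact Hx|apply Un_cv_pow_0; lra].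
Qed.

Lemma in_cyl_is_coding a x : (forall n, in_cyl a x n) -> is_coding lam a x.
Proof.
  intros Hx eps Heps.
  destruct (Un_cv_pow_0 lam ltac:(lra) eps Heps) as [N HN].
  exists N; intros n Hn; specialize (HN n Hn); specialize (Hx n).
  unfold R_dist, in_cyl, cyl_left in *; rewrite Rminus_0_r, Rabs_right in HN
    by (apply Rle_ge, pow_le; lra).
  rewrite Rabs_left1; lra.
Qed.

Lemma is_coding_of_cyl_left_agree a b x : is_coding lam a x ->
  (forall N, exists q, (N <= q)%nat /\ cyl_left lam b q = cyl_left lam a q) ->
  is_coding lam b x.
Proof.
  intros Ha Hagree; apply in_cyl_is_coding; intros n.
  destruct (Hagree n) as [q [Hq Heq]].
  apply (in_cyl_le b x q); [|exact Hq].
  unfold in_cyl; rewrite Heq; exact (is_coding_in_cyl a x Ha q).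
Qed.

(* The two words 24 and 31 encode the same map: f_2 o f_4 = f_3 o f_1. *)
Lemma block_cyl_left a b p : cyl_left lam b p = cyl_left lam a p ->
  block a p -> block b p -> cyl_left lam b (S (S p)) = cyl_left lam a (S (S p)).
Proof.
  intros Hp Ha Hb; rewrite !cyl_left_S, Hp.
  destruct Ha as [[-> ->]|[-> ->]], Hb as [[-> ->]|[-> ->]]; unfold shift; simpl; ring.
Qed.

(* Among the first-level images only those of f_2 and f_3 overlap, and inside
   that overlap only the second-level images of 24 and 31 meet. *)
Lemma second_level_overlap d0 d1 e0 e1 y :
  shift lam d0 + lam * shift lam d1 <= y <= shift lam d0 + lam * shift lam d1 + lam ^ 2 ->
  shift lam e0 + lam * shift lam e1 <= y <= shift lam e0 + lam * shift lam e1 + lam ^ 2 ->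
  d0 <> e0 -> block_pair d0 d1.
Proof.
  intros Hd He Hne; pose proof (shift_bounds d1); pose proof (shift_bounds e1).
  unfold block_pair; destruct d0, e0; try congruence; unfold shift in *; simpl in *;
    try (exfalso; nra); destruct d1; simpl in *; auto; exfalso; nra.
Qed.

Lemma in_cyl_rescaled a x p : in_cyl a x (S (S p)) ->
  shift lam (a p) + lam * shift lam (a (S p))
    <= (x - cyl_left lam a p) / lam ^ p
    <= shift lam (a p) + lam * shift lam (a (S p)) + lam ^ 2.
Proof.
  unfold in_cyl; rewrite !cyl_left_S; intros Hx.
  pose proof (pow_lt lam p lam_pos) as Ht.
  split; [apply Rmult_le_reg_r with (lam ^ p) | apply Rmult_le_reg_l with (lam ^ p)];
    auto; field_simplify; simpl in *; nra.
Qed.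

Lemma codings_branch_at_block a b x p : is_coding lam a x -> is_coding lam b x ->
  cyl_left lam b p = cyl_left lam a p -> b p <> a p ->
  block a p /\ cyl_left lam b (S (S p)) = cyl_left lam a (S (S p)).
Proof.
  intros Ha Hb Hp Hne.
  pose proof (in_cyl_rescaled a x p (is_coding_in_cyl a x Ha _)) as Ya.
  pose proof (in_cyl_rescaled b x p (is_coding_in_cyl b x Hb _)) as Yb.
  rewrite Hp in Yb.
  assert (Ba : block a p) by exact (second_level_overlap _ _ _ _ _ Ya Yb (not_eq_sym Hne)).
  assert (Bb : block b p) by exact (second_level_overlap _ _ _ _ _ Yb Ya Hne).
  split; [exact Ba | exact (block_cyl_left a b p Hp Ba Bb)].
Qed.

Lemma codings_resync a b x N : is_coding lam a x -> is_coding lam b x ->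
  exists q, (N <= q <= S N)%nat /\ cyl_left lam b q = cyl_left lam a q.
Proof.
  intros Ha Hb; induction N as [|N [q [Hq Hqeq]]].
  - exists O; split; [lia|reflexivity].
  - destruct (Nat.eq_dec q (S N)) as [->|Hq']; [exists (S N); split; [lia|exact Hqeq]|].
    assert (q = N) as -> by lia.
    destruct (digit_eq_dec (b N) (a N)) as [Hd|Hd].
    + exists (S N); split; [lia|]. rewrite !cyl_left_S, Hqeq, Hd; reflexivity.
    + exists (S (S N)); split; [lia|]. exact (proj2 (codings_branch_at_block a b x N Ha Hb Hqeq Hd)).
Qed.

Lemma codings_eventually_eq a b x N : is_coding lam a x -> is_coding lam b x ->
  (forall p, (N <= p)%nat -> ~ block a p) -> forall k, (S N <= k)%nat -> b k = a k.
Proof.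
  intros Ha Hb Hnb.
  destruct (codings_resync a b x N Ha Hb) as [q [Hq Hqeq]].
  assert (Hdigit : forall k, (N <= k)%nat -> cyl_left lam b k = cyl_left lam a k -> b k = a k).
  { intros k Hk Hkeq; destruct (digit_eq_dec (b k) (a k)) as [Hd|Hd]; [exact Hd|].
    exfalso; exact (Hnb k Hk (proj1 (codings_branch_at_block a b x k Ha Hb Hkeq Hd))). }
  assert (Hcyl : forall k, (q <= k)%nat -> cyl_left lam b k = cyl_left lam a k).
  { intros k Hk; induction Hk as [|k Hk IH]; [exact Hqeq|].
    rewrite !cyl_left_S, IH, (Hdigit k); [reflexivity|lia|exact IH]. }
  intros k Hk; apply Hdigit, Hcyl; lia.
Qed.

Lemma codings_finite a x N : is_coding lam a x -> (forall p, (N <= p)%nat -> ~ block a p) ->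
  finite_set (fun b => is_coding lam b x).
Proof.
  intros Ha Hnb; apply (finite_set_eventually_eq _ a (S N)); intros b Hb.
  exact (codings_eventually_eq a b x N Ha Hb Hnb).
Qed.

Lemma cyl_left_diagonal a g q :
  ((forall p, q = S p -> ~ block a p) -> cyl_left lam (diagonal a g) q = cyl_left lam a q) /\
  (forall p, q = S p -> block a p -> cyl_left lam (diagonal a g) p = cyl_left lam a p).
Proof.
  induction q as [|q [IHout IHin]]; split.
  - reflexivity.
  - discriminate.
  - intros Hout; specialize (Hout q eq_refl).
    destruct (classic (exists p, q = S p /\ block a p)) as [[p [-> Hp]]|Hnin].
    + apply block_cyl_left; [exact (IHin p eq_refl Hp)|exact Hp|exact (diagonal_block a g p Hp)].
    + assert (Hq : diagonal a g q = a q).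
      { apply diagonal_outside; [exact Hout|intros p -> Hp; exact (Hnin (ex_intro _ p (conj eq_refl Hp)))]. }
      rewrite !(cyl_left_S _ _ q), Hq, IHout; [reflexivity|].
      intros p -> Hp; exact (Hnin (ex_intro _ p (conj eq_refl Hp))).
  - intros p [=<-] Hp; apply IHout; intros p' -> Hp'; exact (block_not_S a p' Hp' Hp).
Qed.

Lemma codings_uncountable a x : is_coding lam a x ->
  (forall N, exists p, (N <= p)%nat /\ block a p) ->
  ~ countable_set (fun b => is_coding lam b x).
Proof.
  intros Ha Hinf [g Hg].
  assert (Hdiag : is_coding lam (diagonal a g) x).
  { apply (is_coding_of_cyl_left_agree a); [exact Ha|]; intros N.
    destruct (classic (forall p, N = S p -> ~ block a p)) as [Hout|Hin].
    - exists N; split; [lia|exact (proj1 (cyl_left_diagonal a g N) Hout)].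
    - exists (S N); split; [lia|]; apply (proj1 (cyl_left_diagonal a g (S N))).
      intros p [= ->] Hp; apply Hin; intros p' -> Hp'; exact (block_not_S a p' Hp' Hp). }
  destruct (Hg _ Hdiag) as [n Hn].
  destruct (block_count_unbounded a Hinf n) as [q Hq].
  destruct (block_count_attained a n q Hq) as [p [Hp Hpn]].
  exact (diagonal_avoids a g n p Hp Hpn (Hn p)).
Qed.

End CodingsOfSmallLambda.

Theorem lemma2p32 (lam : R) (hpos : 0 < lam) (hlt : lam < (5 - sqrt 21) / 2) :
  (forall x : R, attractor lam x ->
     ~ finite_set (fun a => is_coding lam a x) ->
     ~ countable_set (fun a => is_coding lam a x))
  /\ (forall x : R, ~ U_aleph0 lam x).
Proof.
  pose proof (sqrt_sqrt 21 ltac:(lra)); pose proof (sqrt_pos 21).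
  assert (Hquarter : lam < 1 / 4) by nra.
  assert (Hgap : 4 * lam - lam ^ 2 < 1 - lam) by (simpl; nra).
  assert (Hdichotomy : forall x, attractor lam x ->
     ~ finite_set (fun a => is_coding lam a x) -> ~ countable_set (fun a => is_coding lam a x)).
  { intros x [a Ha] Hnfin.
    destruct (classic (forall N, exists p, (N <= p)%nat /\ block a p)) as [Hinf|Hfin].
    - exact (codings_uncountable lam hpos Hquarter Hgap a x Ha Hinf).
    - exfalso; apply Hnfin; apply not_all_ex_not in Hfin as [N HN].
      apply (codings_finite lam hpos Hquarter Hgap a x N Ha).
      intros p Hp Hb; exact (HN (ex_intro _ p (conj Hp Hb))). }
  split; [exact Hdichotomy|].
  intros x (Hx & Hnfin & Hcount); exact (Hdichotomy x Hx Hnfin Hcount).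
Qed.
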